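(* Let $\mathcal U$ be an ultrafilter on a set $I$ and let $(M_i)_{i\in I}$ be a family of pointed metric spaces. Then $\mathcal F((M_i)_{\mathcal U})$ is linearly isometric to the closed linear span of $\{(\delta(x_i))_{\mathcal U}:(x_i)_{\mathcal U}\in (M_i)_{\mathcal U}\}$ in the Banach space ultraproduct $(\mathcal F(M_i))_{\mathcal U}$.
   Context: Ultraproduct of metric spaces: given a set $I$, an ultrafilter $\mathcal U$ on $I$ and metric spaces $(M_i,d_i)$ with distinguished points $0_i\in M_i$, let $\ell_\infty(M_i)=\{(x_i)_{i\in I}\in\prod_i M_i:\sup_i d_i(x_i,0_i)<\infty\}$ with pseudometric $d((x_i),(y_i))=\lim_{\mathcal U,i}d_i(x_i,y_i)$. The ultraproduct $(M_i)_{\mathcal U}$ is the metric quotient identifying points at distance $0$; classes written $(x_i)_{\mathcal U}$, base point $(0_i)_{\mathcal U}$. For Banach spaces (base point $0$) this is the usual Banach ultraproduct with norm $\|(x_i)_{\mathcal U}\|=\lim_{\mathcal U}\|x_i\|$. For a pointed metric space $M$, $\mathrm{Lip}_0(M)$ is the Banach space of real Lipschitz functions vanishing at the base point normed by the Lipschitz constant, $\delta(x)\in \mathrm{Lip}_0(M)^*$ is evaluation at $x$, and $\mathcal F(M)=\overline{\mathrm{span}}\{\delta(x):x\in M\}\subset\mathrm{Lip}_0(M)^*$ is the Lipschitz-free space. *)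

From Stdlib Require Import Reals Lra ClassicalEpsilon List.
Open Scope R_scope.

Record ultrafilter (I : Type) := {
  uf :> (I -> Prop) -> Prop;
  uf_full : uf (fun _ => True);
  uf_proper : ~ uf (fun _ => False);
  uf_mono : forall A B : I -> Prop, (forall i, A i -> B i) -> uf A -> uf B;
  uf_inter : forall A B : I -> Prop, uf A -> uf B -> uf (fun i => A i /\ B i);
  uf_ultra : forall A : I -> Prop, uf A \/ uf (fun i => ~ A i)
}.

Definition ulim {I} (U : ultrafilter I) (a : I -> R) (l : R) : Prop :=
  forall eps, 0 < eps -> U (fun i => Rabs (a i - l) < eps).

(* the (unique, for bounded a) U-limit, chosen classically *)
Definition ulimit {I} (U : ultrafilter I) (a : I -> R) : R :=
  epsilon (inhabits 0) (ulim U a).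

Record pointed_space := PSpace {
  pcar :> Type;
  pdist : pcar -> pcar -> R;
  pbase : pcar
}.

Record pmetric := PMetric {
  pm_space :> pointed_space;
  pm_nonneg : forall x y : pm_space, 0 <= pdist pm_space x y;
  pm_sep : forall x y : pm_space, pdist pm_space x y = 0 <-> x = y;
  pm_sym : forall x y : pm_space, pdist pm_space x y = pdist pm_space y x;
  pm_tri : forall x y z : pm_space,
      pdist pm_space x z <= pdist pm_space x y + pdist pm_space y z
}.

Section Ultraproduct.
Context {I : Type} (U : ultrafilter I) (M : I -> pmetric).

Definition ufam := forall i, pcar (M i).

Definition ubounded (x : ufam) : Prop :=
  exists C, forall i, pdist (M i) (x i) (pbase (M i)) <= C.

Definition udist (x y : ufam) : R := ulimit U (fun i => pdist (M i) (x i) (y i)).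

Definition basefam : ufam := fun i => pbase (M i).

Lemma basefam_bounded : ubounded basefam.
Proof.
  exists 0; intro i; unfold basefam.
  rewrite (proj2 (pm_sep (M i) _ _) eq_refl); lra.
Qed.

Definition uclass (x : ufam) : ufam -> Prop := fun y => ubounded y /\ udist x y = 0.

(* the carrier of the ultraproduct: the classes (x_i)_U *)
Definition ucar := {P : ufam -> Prop | exists x, ubounded x /\ P = uclass x}.

Definition urep (P : ucar) : ufam :=
  epsilon (inhabits basefam) (fun x => ubounded x /\ proj1_sig P = uclass x).

Definition ultraproduct : pointed_space :=
  {| pcar := ucar;
     pdist := fun P Q => udist (urep P) (urep Q);
     pbase := exist _ (uclass basefam) (ex_intro _ basefam (conj basefam_bounded eq_refl)) |}.

End Ultraproduct.

Section Free.
Context (M : pointed_space).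

Definition lip0 (f : M -> R) : Prop :=
  f (pbase M) = 0 /\ exists L, forall x y, Rabs (f x - f y) <= L * pdist M x y.

Definition lip_ball (f : M -> R) : Prop :=
  f (pbase M) = 0 /\ forall x y, Rabs (f x - f y) <= pdist M x y.

(* functionals on Lip_0(M) (values off Lip_0(M) are irrelevant) *)
Definition functional := (M -> R) -> R.

Definition lin_on_lip0 (phi : functional) : Prop :=
  forall f g a b, lip0 f -> lip0 g ->
    phi (fun x => a * f x + b * g x) = a * phi f + b * phi g.

Definition fnorm (phi : functional) : R :=
  epsilon (inhabits 0)
    (is_lub (fun t => exists f, lip_ball f /\ t = Rabs (phi f))).

Definition delta (x : M) : functional := fun f => f x.

Definition molecule (l : list (R * M)) : functional :=
  fun f => fold_right (fun p acc => fst p * f (snd p) + acc) 0 l.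

(* F(M) = closed linear span of delta(M) in Lip_0(M)^* *)
Definition in_free (phi : functional) : Prop :=
  lin_on_lip0 phi /\
  (exists C, forall f, lip_ball f -> Rabs (phi f) <= C) /\
  forall eps, 0 < eps -> exists l : list (R * M),
    forall f, lip_ball f -> Rabs (phi f - molecule l f) <= eps.

End Free.

Section BanachUltra.
Context {I : Type} (U : ultrafilter I) (M : I -> pmetric).

Definition ffam := forall i, functional (M i).

(* representatives of elements of (F(M_i))_U *)
Definition in_free_ultra (nu : ffam) : Prop :=
  (forall i, in_free (M i) (nu i)) /\ exists C, forall i, fnorm (M i) (nu i) <= C.

Definition unorm (nu : ffam) : R := ulimit U (fun i => fnorm (M i) (nu i)).

Definition delta_comb (l : list (R * ufam M)) : ffam :=
  fun i => molecule (M i) (map (fun p => (fst p, snd p i)) l).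

Definition ffam_sub (nu mu : ffam) : ffam := fun i f => nu i f - mu i f.

Definition in_delta_span_closure (nu : ffam) : Prop :=
  in_free_ultra nu /\
  forall eps, 0 < eps -> exists l : list (R * ufam M),
    Forall (fun p => ubounded M (snd p)) l /\
    unorm (ffam_sub nu (delta_comb l)) <= eps.

End BanachUltra.

From Stdlib Require Import Reals Lra Lia List.
From Stdlib Require Import Classical ClassicalEpsilon ChoiceFacts.
From Stdlib Require Import FunctionalExtensionality PropExtensionality.
From Coquelicot Require Import Rcomplements.
Open Scope R_scope.

(* The heart of the proof is that the ultraproduct is isometric on molecules: for points
   P_k = (x^k_i)_U of M_U,
     || sum a_k delta(P_k) ||_F(M_U) = lim_U || sum a_k delta(x^k_i) ||_F(M_i).
   For "<=", a U-limit of norming 1-Lipschitz functions on the M_i is a 1-Lipschitz function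
   on M_U.  For ">=", a norming 1-Lipschitz function on M_U, read on the finitely many points
   involved, is almost 1-Lipschitz on their representatives in M_i for U-many i, and
   McShane's formula extends it to M_i with a small error.
   A general phi in F(M_U) is the limit of molecules mu_n.  In the coordinate i the lifted
   molecules mu_n(i) stay Cauchy (at the rate dictated by the mu_n) up to some level N(i),
   possibly infinite, with N(i) >= n for U-many i; taking for T(phi)_i the molecule of level
   N(i), or the limit if N(i) is infinite, gives a family at distance ||phi - mu|| from every
   lifted molecule mu.  Linearity, isometry and the span condition follow, and surjectivity
   comes from the completeness of F(M_U). *)

(** * Ultrafilter limits *)

Section Ultralimits.
Context {I : Type} (U : ultrafilter I).

Lemma uf_witness (A : I -> Prop) : U A -> exists i, A i.
Proof.
  intro HA. apply NNPP. intro Hno. apply (uf_proper _ U).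
  apply (uf_mono _ U A); [|exact HA]. intros i Ai. apply Hno. now exists i.
Qed.

Lemma uf_and {A B : I -> Prop} : U A -> U B -> U (fun i => A i /\ B i).
Proof. apply uf_inter. Qed.

Lemma uf_weaken {A B : I -> Prop} : U A -> (forall i, A i -> B i) -> U B.
Proof. intros HA HAB. exact (uf_mono _ U A B HAB HA). Qed.

Lemma uf_of_forall (A : I -> Prop) : (forall i, A i) -> U A.
Proof. intro H. apply (uf_weaken (uf_full _ U)). auto. Qed.

Lemma uf_forall_in {X} (l : list X) (P : X -> I -> Prop) :
  (forall x, In x l -> U (P x)) -> U (fun i => forall x, In x l -> P x i).
Proof.
  induction l as [|a l IH]; intro H.
  - apply uf_of_forall. intros i x [].
  - apply (uf_weaken (uf_and (H a (or_introl eq_refl)) (IH (fun x Hx => H x (or_intror Hx))))).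
    intros i [Ha Hl] x [<-|Hx]; auto.
Qed.

Lemma uf_forall_le (n : nat) (P : nat -> I -> Prop) :
  (forall k, (k <= n)%nat -> U (P k)) -> U (fun i => forall k, (k <= n)%nat -> P k i).
Proof.
  intro H.
  assert (Hseq : forall k, In k (seq 0 (S n)) <-> (k <= n)%nat).
  { intro k. rewrite in_seq. lia. }
  apply (uf_weaken (uf_forall_in (seq 0 (S n)) P (fun k Hk => H k (proj1 (Hseq k) Hk)))).
  intros i Hi k Hk. now apply Hi, Hseq.
Qed.

Lemma ulim_unique a l1 l2 : ulim U a l1 -> ulim U a l2 -> l1 = l2.
Proof.
  intros H1 H2. apply NNPP; intro Hne.
  assert (Hpos : 0 < Rabs (l1 - l2) / 2)
    by (pose proof (Rabs_pos_lt _ (Rminus_eq_contra _ _ Hne)); lra).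
  destruct (uf_witness _ (uf_and (H1 _ Hpos) (H2 _ Hpos))) as [i [A B]].
  pose proof (Rabs_triang (l1 - a i) (a i - l2)) as Htri.
  rewrite Rabs_minus_sym in A.
  replace (l1 - a i + (a i - l2)) with (l1 - l2) in Htri by ring. lra.
Qed.

Lemma ulim_of_bounded a : (exists C, forall i, Rabs (a i) <= C) -> exists l, ulim U a l.
Proof.
  intros [C HC].
  set (E := fun s => U (fun i => s <= a i)).
  assert (HEb : bound E).
  { exists C. intros s Hs. destruct (uf_witness _ Hs) as [i Hi].
    specialize (HC i). apply Rabs_le_between in HC. lra. }
  assert (HEn : exists s, E s).
  { exists (- C). apply uf_of_forall. intro i.
    specialize (HC i). apply Rabs_le_between in HC. lra. }
  destruct (completeness E HEb HEn) as [l [Hub Hlub]].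
  exists l. intros eps Heps.
  assert (Above : U (fun i => a i < l + eps)).
  { destruct (uf_ultra _ U (fun i => a i < l + eps)) as [H|H]; [exact H|].
    assert (HE : E (l + eps)) by (apply (uf_weaken H); intros i Hi; lra).
    specialize (Hub _ HE). lra. }
  assert (Below : U (fun i => l - eps < a i)).
  { apply NNPP. intro Hno.
    assert (Hup : is_upper_bound E (l - eps)).
    { intros s Hs. apply Rnot_lt_le. intro Hlt. apply Hno.
      apply (uf_weaken Hs). intros i Hi. lra. }
    specialize (Hlub _ Hup). lra. }
  apply (uf_weaken (uf_and Above Below)). intros i [A B].
  apply Rabs_lt_between. lra.
Qed.

Lemma ulimit_eq a l : ulim U a l -> ulimit U a = l.
Proof.
  intro H. apply (ulim_unique a); [|exact H].
  unfold ulimit. apply epsilon_spec. now exists l.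
Qed.

Lemma ulimit_spec a : (exists C, forall i, Rabs (a i) <= C) -> ulim U a (ulimit U a).
Proof.
  intro H. destruct (ulim_of_bounded a H) as [l Hl]. now rewrite (ulimit_eq a l Hl).
Qed.

Lemma ulim_const c : ulim U (fun _ => c) c.
Proof. intros eps He. apply uf_of_forall. intro. rewrite Rminus_diag, Rabs_R0. lra. Qed.

Lemma ulim_ext a b l : ulim U a l -> U (fun i => a i = b i) -> ulim U b l.
Proof.
  intros Ha Hab eps He. apply (uf_weaken (uf_and (Ha eps He) Hab)).
  intros i [A B]. now rewrite <- B.
Qed.

Lemma ulim_plus a b la lb :
  ulim U a la -> ulim U b lb -> ulim U (fun i => a i + b i) (la + lb).
Proof.
  intros Ha Hb eps He.
  apply (uf_weaken (uf_and (Ha (eps / 2) ltac:(lra)) (Hb (eps / 2) ltac:(lra)))).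
  intros i [A B]. apply Rabs_lt_between in A, B. apply Rabs_lt_between. lra.
Qed.

Lemma ulim_minus a b la lb :
  ulim U a la -> ulim U b lb -> ulim U (fun i => a i - b i) (la - lb).
Proof.
  intros Ha Hb eps He.
  apply (uf_weaken (uf_and (Ha (eps / 2) ltac:(lra)) (Hb (eps / 2) ltac:(lra)))).
  intros i [A B]. apply Rabs_lt_between in A, B. apply Rabs_lt_between. lra.
Qed.

Lemma ulim_scal c a la : ulim U a la -> ulim U (fun i => c * a i) (c * la).
Proof.
  intros Ha eps He.
  assert (Hc : 0 < Rabs c + 1) by (pose proof (Rabs_pos c); lra).
  apply (uf_weaken (Ha (eps / (Rabs c + 1)) (Rdiv_lt_0_compat _ _ He Hc))).
  intros i Hi. rewrite <- Rmult_minus_distr_l, Rabs_mult.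
  apply (Rmult_lt_compat_l (Rabs c + 1)) in Hi; [|exact Hc].
  replace ((Rabs c + 1) * (eps / (Rabs c + 1))) with eps in Hi by (field; lra).
  pose proof (Rabs_pos (a i - la)). nra.
Qed.

Lemma ulim_abs a l : ulim U a l -> ulim U (fun i => Rabs (a i)) (Rabs l).
Proof.
  intros Ha eps He. apply (uf_weaken (Ha eps He)). intros i Hi.
  eapply Rle_lt_trans; [apply Rabs_triang_inv2|exact Hi].
Qed.

Lemma ulim_le a b la lb :
  ulim U a la -> ulim U b lb -> U (fun i => a i <= b i) -> la <= lb.
Proof.
  intros Ha Hb Hab. apply Rnot_lt_le. intro Hlt.
  assert (He : 0 < (la - lb) / 2) by lra.
  destruct (uf_witness _ (uf_and (uf_and (Ha _ He) (Hb _ He)) Hab)) as [i [[A B] C]].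
  apply Rabs_lt_between in A, B. lra.
Qed.

Lemma ulim_lt_ev a l c : ulim U a l -> l < c -> U (fun i => a i < c).
Proof.
  intros H Hl. apply (uf_weaken (H (c - l) ltac:(lra))). intros i Hi.
  apply Rabs_lt_between in Hi. lra.
Qed.

Lemma ulim_gt_ev a l c : ulim U a l -> c < l -> U (fun i => c < a i).
Proof.
  intros H Hl. apply (uf_weaken (H (l - c) ltac:(lra))). intros i Hi.
  apply Rabs_lt_between in Hi. lra.
Qed.

End Ultralimits.

Definition lcomb {X} (l : list (R * X)) (h : X -> R) : R :=
  fold_right (fun p acc => fst p * h (snd p) + acc) 0 l.

Definition abs_coefs {X} (l : list (R * X)) : list (R * X) :=
  map (fun p => (Rabs (fst p), snd p)) l.

Definition scale_coefs {X} (c : R) (l : list (R * X)) : list (R * X) :=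
  map (fun p => (c * fst p, snd p)) l.

Lemma lcomb_map {X Y} (e : X -> Y) (l : list (R * X)) h :
  lcomb (map (fun p => (fst p, e (snd p))) l) h = lcomb l (fun x => h (e x)).
Proof. induction l as [|p l IH]; simpl; [reflexivity|now rewrite IH]. Qed.

Lemma lcomb_app {X} (l1 l2 : list (R * X)) h : lcomb (l1 ++ l2) h = lcomb l1 h + lcomb l2 h.
Proof. induction l1 as [|p l IH]; simpl; [ring|rewrite IH; ring]. Qed.

Lemma lcomb_scale {X} c (l : list (R * X)) h : lcomb (scale_coefs c l) h = c * lcomb l h.
Proof. induction l as [|p l IH]; simpl; [ring|rewrite IH; ring]. Qed.

Lemma lcomb_linear {X} (l : list (R * X)) a b f g :
  lcomb l (fun x => a * f x + b * g x) = a * lcomb l f + b * lcomb l g.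
Proof. induction l as [|p l IH]; simpl; [ring|rewrite IH; ring]. Qed.

Lemma lcomb_sub {X} (l : list (R * X)) f g :
  lcomb l f - lcomb l g = lcomb l (fun x => f x - g x).
Proof. induction l as [|p l IH]; simpl; [ring|rewrite <- IH; ring]. Qed.

Lemma lcomb_abs_le {X} (l : list (R * X)) h k :
  (forall p, In p l -> Rabs (h (snd p)) <= k (snd p)) -> Rabs (lcomb l h) <= lcomb (abs_coefs l) k.
Proof.
  induction l as [|p l IH]; intro H; simpl.
  - rewrite Rabs_R0. lra.
  - eapply Rle_trans; [apply Rabs_triang|]. rewrite Rabs_mult.
    apply Rplus_le_compat; [|auto using in_cons].
    apply Rmult_le_compat_l; [apply Rabs_pos|apply H; now left].
Qed.

Lemma lcomb_const {X} (l : list (R * X)) c : lcomb l (fun _ => c) = lcomb l (fun _ => 1) * c.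
Proof. induction l as [|p l IH]; simpl; [ring|rewrite IH; ring]. Qed.

Lemma ulim_lcomb {I X} (U : ultrafilter I) (l : list (R * X)) (h : I -> X -> R) (w : X -> R) :
  (forall p, In p l -> ulim U (fun i => h i (snd p)) (w (snd p))) ->
  ulim U (fun i => lcomb l (h i)) (lcomb l w).
Proof.
  induction l as [|p l IH]; intro H; simpl.
  - apply ulim_const.
  - apply ulim_plus; [apply ulim_scal; apply H; now left|auto using in_cons].
Qed.

Lemma Un_cv_scal (s : nat -> R) l K : Un_cv s l -> Un_cv (fun n => K * s n) (K * l).
Proof.
  intros H eps He.
  assert (HK : 0 < Rabs K + 1) by (pose proof (Rabs_pos K); lra).
  destruct (H (eps / (Rabs K + 1)) (Rdiv_lt_0_compat _ _ He HK)) as [N HN].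
  exists N. intros n Hn. specialize (HN n Hn). unfold Rdist in *.
  rewrite <- Rmult_minus_distr_l, Rabs_mult.
  apply (Rmult_lt_compat_l (Rabs K + 1)) in HN; [|exact HK].
  replace ((Rabs K + 1) * (eps / (Rabs K + 1))) with eps in HN by (field; lra).
  pose proof (Rabs_pos (s n - l)). nra.
Qed.

Lemma Un_cv_dist_le (s : nat -> R) l x c m :
  Un_cv s l -> (forall n, (m <= n)%nat -> Rabs (s n - x) <= c) -> Rabs (l - x) <= c.
Proof.
  intros H Hb. apply Rnot_lt_le. intro Hlt.
  destruct (H (Rabs (l - x) - c) ltac:(lra)) as [N HN].
  specialize (HN (max N m) (Nat.le_max_l _ _)). specialize (Hb (max N m) (Nat.le_max_r _ _)).
  unfold Rdist in HN. pose proof (Rabs_triang (s (max N m) - x) (l - s (max N m))) as Htri.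
  rewrite Rabs_minus_sym in HN.
  replace (s (max N m) - x + (l - s (max N m))) with (l - x) in Htri by ring. lra.
Qed.

Definition epsn (n : nat) : R := / (INR n + 1).

Lemma epsn_pos n : 0 < epsn n.
Proof. unfold epsn. apply Rinv_0_lt_compat. pose proof (pos_INR n). lra. Qed.

Lemma epsn_0 : epsn 0 = 1.
Proof. unfold epsn. simpl. rewrite Rplus_0_l. apply Rinv_1. Qed.

Lemma epsn_antitone m n : (m <= n)%nat -> epsn n <= epsn m.
Proof.
  intro H. unfold epsn. apply le_INR in H. pose proof (pos_INR m).
  apply Rinv_le_contravar; lra.
Qed.

Lemma epsn_small e : 0 < e -> exists m, epsn m < e.
Proof.
  intro He. destruct (INR_unbounded (/ e)) as [m Hm]. exists m. unfold epsn.
  pose proof (Rinv_0_lt_compat e He). pose proof (pos_INR m).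
  rewrite <- (Rinv_inv e). apply Rinv_lt_contravar; [apply Rmult_lt_0_compat|]; lra.
Qed.

Lemma le_of_le_epsn x y K : (forall m, x <= y + K * epsn m) -> x <= y.
Proof.
  intro H. apply Rle_plus_epsilon. intros e He.
  assert (HK : 0 < Rabs K + 1) by (pose proof (Rabs_pos K); lra).
  destruct (epsn_small (e / (Rabs K + 1))) as [m Hm]; [now apply Rdiv_lt_0_compat|].
  specialize (H m). pose proof (epsn_pos m). pose proof (Rle_abs K).
  apply (Rmult_lt_compat_l (Rabs K + 1)) in Hm; [|exact HK].
  replace ((Rabs K + 1) * (e / (Rabs K + 1))) with e in Hm by (field; lra). nra.
Qed.

Lemma nat_last_true (P : nat -> Prop) : P 0%nat -> ~ (forall n, P n) -> exists n, P n /\ ~ P (S n).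
Proof.
  intros H0 Hall. apply NNPP. intro Hno. apply Hall. intro n.
  induction n as [|n IH]; [exact H0|]. apply NNPP. intro HS. apply Hno. now exists n.
Qed.

(** * The dual norm and the Lipschitz-free space *)

Definition fbound (M : pointed_space) (phi : functional M) (C : R) : Prop :=
  forall f, lip_ball M f -> Rabs (phi f) <= C.

Definition fbounded (M : pointed_space) (phi : functional M) : Prop := exists C, fbound M phi C.

Definition fsub {M : pointed_space} (phi psi : functional M) : functional M :=
  fun f => phi f - psi f.

Definition fcomb {M : pointed_space} (a : R) (phi : functional M) (b : R) (psi : functional M)
  : functional M := fun f => a * phi f + b * psi f.

Definition fdist (M : pointed_space) (phi psi : functional M) : R := fnorm M (fsub phi psi).

Lemma molecule_eval (M : pointed_space) l f : molecule M l f = lcomb l f.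
Proof. reflexivity. Qed.

Lemma fnorm_ext_abs (M : pointed_space) (phi psi : functional M) :
  (forall f, Rabs (phi f) = Rabs (psi f)) -> fnorm M phi = fnorm M psi.
Proof.
  intro H. unfold fnorm. do 2 f_equal. apply functional_extensionality. intro t.
  apply propositional_extensionality.
  split; intros [f [Hf ->]]; exists f; split; auto.
Qed.

Lemma fdist_sym (M : pointed_space) (phi psi : functional M) : fdist M phi psi = fdist M psi phi.
Proof. apply fnorm_ext_abs. intro f. apply Rabs_minus_sym. Qed.

Section Functionals.
Context {M : pointed_space} (dist_nonneg : forall x y : M, 0 <= pdist M x y).

Lemma lip_ball_zero : lip_ball M (fun _ => 0).
Proof. split; [reflexivity|]. intros x y. rewrite Rminus_diag, Rabs_R0. apply dist_nonneg. Qed.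

Lemma lip_ball_abs f x : lip_ball M f -> Rabs (f x) <= pdist M x (pbase M).
Proof. intros [H0 H1]. specialize (H1 x (pbase M)). now rewrite H0, Rminus_0_r in H1. Qed.

Lemma lip_ball_lip0 f : lip_ball M f -> lip0 M f.
Proof. intros [H0 H1]. split; [exact H0|]. exists 1. intros x y. rewrite Rmult_1_l. auto. Qed.

Lemma lip0_multiple_of_ball f : lip0 M f -> exists K g, lip_ball M g /\ f = (fun x => K * g x).
Proof.
  intros [H0 [L HL]]. set (K := Rabs L + 1).
  assert (HK : 0 < K) by (pose proof (Rabs_pos L); unfold K; lra).
  exists K, (fun x => f x / K). split.
  - split; [rewrite H0; unfold Rdiv; ring|]. intros x y.
    replace (f x / K - f y / K) with ((f x - f y) / K) by (field; lra).
    unfold Rdiv. rewrite Rabs_mult, Rabs_inv, (Rabs_pos_eq K) by lra.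
    apply (Rmult_le_reg_r K); [exact HK|].
    rewrite Rmult_assoc, Rinv_l, Rmult_1_r by lra.
    eapply Rle_trans; [apply HL|]. pose proof (dist_nonneg x y). pose proof (Rle_abs L).
    unfold K. nra.
  - apply functional_extensionality. intro x. field. lra.
Qed.

Lemma lin_on_lip0_scale phi K g :
  lin_on_lip0 M phi -> lip_ball M g -> phi (fun x => K * g x) = K * phi g.
Proof.
  intros Hlin Hg. replace (fun x => K * g x) with (fun x => K * g x + 0 * g x)
    by (apply functional_extensionality; intro; ring).
  rewrite Hlin by now apply lip_ball_lip0. ring.
Qed.

Lemma fnorm_is_lub phi : fbounded M phi ->
  is_lub (fun t => exists f, lip_ball M f /\ t = Rabs (phi f)) (fnorm M phi).
Proof.
  intros [C HC]. unfold fnorm. apply epsilon_spec.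
  destruct (completeness (fun t => exists f, lip_ball M f /\ t = Rabs (phi f))) as [m Hm].
  - exists C. intros t [f [Hf ->]]. now apply HC.
  - exists (Rabs (phi (fun _ => 0))), (fun _ => 0). split; [apply lip_ball_zero|reflexivity].
  - now exists m.
Qed.

Lemma fnorm_ge_abs phi f : fbounded M phi -> lip_ball M f -> Rabs (phi f) <= fnorm M phi.
Proof. intros H Hf. apply (proj1 (fnorm_is_lub phi H)). now exists f. Qed.

Lemma fnorm_le phi C : fbound M phi C -> fnorm M phi <= C.
Proof.
  intro H. apply (proj2 (fnorm_is_lub phi (ex_intro _ C H))).
  intros t [f [Hf ->]]. now apply H.
Qed.

Lemma fnorm_ge0 phi : fbounded M phi -> 0 <= fnorm M phi.
Proof.
  intro H. eapply Rle_trans; [apply Rabs_pos|]. apply (fnorm_ge_abs phi _ H lip_ball_zero).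
Qed.

Lemma fnorm_approx phi eps : fbounded M phi -> 0 < eps ->
  exists f, lip_ball M f /\ fnorm M phi - eps < Rabs (phi f).
Proof.
  intros H He. apply NNPP. intro Hno.
  enough (fnorm M phi <= fnorm M phi - eps) by lra.
  apply fnorm_le. intros f Hf. apply Rnot_lt_le. intro Hlt. apply Hno. now exists f.
Qed.

Lemma fbounded_comb a phi b psi :
  fbounded M phi -> fbounded M psi -> fbounded M (fcomb a phi b psi).
Proof.
  intros [C1 H1] [C2 H2]. exists (Rabs a * C1 + Rabs b * C2). intros f Hf.
  eapply Rle_trans; [apply Rabs_triang|]. rewrite !Rabs_mult.
  apply Rplus_le_compat; apply Rmult_le_compat_l; auto using Rabs_pos.
Qed.

Lemma fbounded_sub phi psi : fbounded M phi -> fbounded M psi -> fbounded M (fsub phi psi).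
Proof.
  intros [C1 H1] [C2 H2]. exists (C1 + C2). intros f Hf. unfold fsub.
  specialize (H1 f Hf). specialize (H2 f Hf).
  apply Rabs_le_between in H1, H2. apply Rabs_le_between. lra.
Qed.

Lemma fdist_ge_abs phi psi f : fbounded M phi -> fbounded M psi -> lip_ball M f ->
  Rabs (phi f - psi f) <= fdist M phi psi.
Proof. intros H1 H2 Hf. apply (fnorm_ge_abs (fsub phi psi)); auto using fbounded_sub. Qed.

Lemma fdist_le phi psi c : (forall f, lip_ball M f -> Rabs (phi f - psi f) <= c) ->
  fdist M phi psi <= c.
Proof. apply fnorm_le. Qed.

Lemma fdist_ge0 phi psi : fbounded M phi -> fbounded M psi -> 0 <= fdist M phi psi.
Proof. intros H1 H2. apply fnorm_ge0. now apply fbounded_sub. Qed.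

Lemma fdist_triangle phi chi psi : fbounded M phi -> fbounded M chi -> fbounded M psi ->
  fdist M phi psi <= fdist M phi chi + fdist M chi psi.
Proof.
  intros H1 H2 H3. apply fdist_le. intros f Hf.
  replace (phi f - psi f) with ((phi f - chi f) + (chi f - psi f)) by ring.
  eapply Rle_trans; [apply Rabs_triang|].
  apply Rplus_le_compat; now apply fdist_ge_abs.
Qed.

Lemma fdist_comb a phi phi' b psi psi' :
  fbounded M phi -> fbounded M phi' -> fbounded M psi -> fbounded M psi' ->
  fdist M (fcomb a phi b psi) (fcomb a phi' b psi')
  <= Rabs a * fdist M phi phi' + Rabs b * fdist M psi psi'.
Proof.
  intros H1 H2 H3 H4. apply fdist_le. intros f Hf. unfold fcomb.
  replace (a * phi f + b * psi f - (a * phi' f + b * psi' f))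
    with (a * (phi f - phi' f) + b * (psi f - psi' f)) by ring.
  eapply Rle_trans; [apply Rabs_triang|]. rewrite !Rabs_mult.
  apply Rplus_le_compat; apply Rmult_le_compat_l; auto using Rabs_pos, fdist_ge_abs.
Qed.

Lemma fbound_molecule l :
  fbound M (molecule M l) (lcomb (abs_coefs l) (fun x => pdist M x (pbase M))).
Proof. intros f Hf. apply lcomb_abs_le. intros p _. now apply lip_ball_abs. Qed.

Lemma in_free_fbounded phi : in_free M phi -> fbounded M phi.
Proof. intros [_ [H _]]. exact H. Qed.

Lemma in_free_molecule l : in_free M (molecule M l).
Proof.
  split; [|split].
  - intros f g a b _ _. apply lcomb_linear.
  - eexists. apply fbound_molecule.
  - intros eps He. exists l. intros f _. rewrite Rminus_diag, Rabs_R0. lra.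
Qed.

Lemma in_free_approx phi eps : in_free M phi -> 0 < eps ->
  exists l, fdist M phi (molecule M l) <= eps.
Proof.
  intros [_ [_ H]] He. destruct (H eps He) as [l Hl]. exists l. now apply fdist_le.
Qed.

Lemma molecule_comb a l1 b l2 :
  molecule M (scale_coefs a l1 ++ scale_coefs b l2) = fcomb a (molecule M l1) b (molecule M l2).
Proof.
  apply functional_extensionality. intro f. unfold fcomb.
  rewrite molecule_eval, lcomb_app, !lcomb_scale. reflexivity.
Qed.

Lemma in_free_comb a phi b psi : in_free M phi -> in_free M psi -> in_free M (fcomb a phi b psi).
Proof.
  intros Hphi Hpsi. split; [|split].
  - intros f g c d Hf Hg. destruct Hphi as [L1 _]. destruct Hpsi as [L2 _].
    unfold fcomb. rewrite (L1 f g c d Hf Hg), (L2 f g c d Hf Hg). ring.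
  - apply fbounded_comb; now apply in_free_fbounded.
  - intros eps He.
    set (k := eps / (Rabs a + Rabs b + 1)).
    assert (Hk : 0 < k) by (unfold k; pose proof (Rabs_pos a); pose proof (Rabs_pos b);
                            apply Rdiv_lt_0_compat; lra).
    destruct (in_free_approx phi k Hphi Hk) as [l1 Hl1].
    destruct (in_free_approx psi k Hpsi Hk) as [l2 Hl2].
    exists (scale_coefs a l1 ++ scale_coefs b l2). intros f Hf.
    rewrite molecule_comb.
    eapply Rle_trans; [apply (fdist_ge_abs _ _ f); auto using fbounded_comb, in_free_fbounded,
                        in_free_molecule|].
    eapply Rle_trans; [apply fdist_comb; auto using in_free_fbounded, in_free_molecule|].
    assert (Hab : (Rabs a + Rabs b) * k <= eps).
    { unfold k. pose proof (Rabs_pos a); pose proof (Rabs_pos b).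
      apply (Rmult_le_reg_r (Rabs a + Rabs b + 1)); [lra|].
      field_simplify; lra. }
    pose proof (Rabs_pos a); pose proof (Rabs_pos b). nra.
Qed.

Section Completeness.
Variables (psi : nat -> functional M) (c : nat -> R).
Hypothesis psi_free : forall n, in_free M (psi n).
Hypothesis c_small : forall e, 0 < e -> exists m, c m < e.
Hypothesis psi_cauchy : forall m n, (m <= n)%nat -> fdist M (psi n) (psi m) <= c m.

Definition pointwise_limit : functional M :=
  fun f => epsilon (inhabits 0) (Un_cv (fun n => psi n f)).

Lemma pointwise_limit_eq f l : Un_cv (fun n => psi n f) l -> pointwise_limit f = l.
Proof. intro Hl. apply (UL_sequence _ _ _ (epsilon_spec _ _ (ex_intro _ l Hl)) Hl). Qed.

Let psi_fbounded n : fbounded M (psi n) := in_free_fbounded _ (psi_free n).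

Lemma pointwise_limit_cv_ball g : lip_ball M g -> Un_cv (fun n => psi n g) (pointwise_limit g).
Proof.
  intro Hg. destruct (R_complete (fun n => psi n g)) as [l Hl];
    [|now rewrite (pointwise_limit_eq g l Hl)].
  intros eps He. destruct (c_small (eps / 2) ltac:(lra)) as [m Hm]. exists m.
  intros n k Hn Hk. unfold Rdist.
  pose proof (fdist_ge_abs _ _ g (psi_fbounded n) (psi_fbounded m) Hg) as Dn.
  pose proof (fdist_ge_abs _ _ g (psi_fbounded k) (psi_fbounded m) Hg) as Dk.
  pose proof (psi_cauchy m n Hn). pose proof (psi_cauchy m k Hk).
  apply Rabs_le_between in Dn, Dk. apply Rabs_lt_between. lra.
Qed.

Lemma pointwise_limit_cv f : lip0 M f -> Un_cv (fun n => psi n f) (pointwise_limit f).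
Proof.
  intro Hf. destruct (lip0_multiple_of_ball f Hf) as [K [g [Hg ->]]].
  assert (Hlim : Un_cv (fun n => psi n (fun x => K * g x)) (K * pointwise_limit g)).
  { replace (fun n => psi n (fun x => K * g x)) with (fun n => K * psi n g)
      by (apply functional_extensionality; intro n; symmetry;
          apply lin_on_lip0_scale; [apply psi_free|exact Hg]).
    now apply Un_cv_scal, pointwise_limit_cv_ball. }
  now rewrite (pointwise_limit_eq _ _ Hlim).
Qed.

Lemma pointwise_limit_close m g : lip_ball M g -> Rabs (pointwise_limit g - psi m g) <= c m.
Proof.
  intro Hg. apply (Un_cv_dist_le _ _ _ _ m (pointwise_limit_cv_ball g Hg)).
  intros n Hn. eapply Rle_trans; [apply fdist_ge_abs; auto using psi_fbounded|].
  apply psi_cauchy, Hn.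
Qed.

Lemma in_free_pointwise_limit : in_free M pointwise_limit.
Proof.
  split; [|split].
  - intros f g a b Hf Hg. apply pointwise_limit_eq.
    replace (fun n => psi n (fun x => a * f x + b * g x)) with (fun n => a * psi n f + b * psi n g)
      by (apply functional_extensionality; intro n; symmetry; apply (psi_free n); auto).
    apply CV_plus; apply Un_cv_scal; now apply pointwise_limit_cv.
  - destruct (psi_fbounded 0%nat) as [C HC]. exists (C + c 0%nat). intros g Hg.
    specialize (HC g Hg). pose proof (pointwise_limit_close 0%nat g Hg) as Hclose.
    apply Rabs_le_between in HC, Hclose. apply Rabs_le_between. lra.
  - intros eps He. destruct (c_small (eps / 2) ltac:(lra)) as [m Hm].
    destruct (in_free_approx (psi m) (eps / 2) (psi_free m) ltac:(lra)) as [l Hl].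
    exists l. intros g Hg. pose proof (pointwise_limit_close m g Hg) as Hclose.
    pose proof (fdist_ge_abs _ _ g (psi_fbounded m) (in_free_fbounded _ (in_free_molecule l)) Hg)
      as Hmol.
    apply Rabs_le_between in Hclose, Hmol. apply Rabs_le_between. lra.
Qed.

End Completeness.

Lemma in_free_complete (psi : nat -> functional M) (c : nat -> R) :
  (forall n, in_free M (psi n)) -> (forall e, 0 < e -> exists m, c m < e) ->
  (forall m n, (m <= n)%nat -> fdist M (psi n) (psi m) <= c m) ->
  exists phi, in_free M phi /\ forall m, fdist M phi (psi m) <= c m.
Proof.
  intros Hfree Hc Hcau. exists (pointwise_limit psi). split.
  - now apply (in_free_pointwise_limit psi c).
  - intro m. apply fdist_le. intros g Hg. now apply pointwise_limit_close.
Qed.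

(* The factor 2 is slack: lifted molecules then satisfy the bound U-eventually. *)
Definition cauchy_upto (mu : nat -> functional M) (n : nat) : Prop :=
  forall m k, (m <= n)%nat -> (k <= n)%nat -> fdist M (mu m) (mu k) <= 2 * (epsn m + epsn k).

Lemma free_cauchy_selection mu : (forall n, in_free M (mu n)) ->
  exists psi, in_free M psi /\ fdist M psi (mu 0%nat) <= 4 /\
    forall m, cauchy_upto mu m -> fdist M psi (mu m) <= 4 * epsn m.
Proof.
  intro Hfree.
  assert (Hmono : forall m n, (m <= n)%nat -> cauchy_upto mu n -> cauchy_upto mu m).
  { intros m n Hmn H k j Hk Hj. apply H; lia. }
  assert (Hstep : forall n m, cauchy_upto mu n -> (m <= n)%nat ->
                              fdist M (mu n) (mu m) <= 4 * epsn m).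
  { intros n m H Hmn. eapply Rle_trans; [apply H; lia|].
    pose proof (epsn_antitone _ _ Hmn). lra. }
  destruct (classic (forall n, cauchy_upto mu n)) as [Hall|Hnot].
  - destruct (in_free_complete mu (fun m => 4 * epsn m) Hfree) as [psi [Hpsi Hclose]].
    + intros e He. destruct (epsn_small (e / 4)) as [m Hm]; [lra|]. exists m. lra.
    + intros m n Hmn. now apply Hstep.
    + exists psi. split; [exact Hpsi|split; [|auto]].
      pose proof (Hclose 0%nat) as H0. rewrite epsn_0 in H0. lra.
  - destruct (classic (cauchy_upto mu 0)) as [H0|H0].
    + destruct (nat_last_true _ H0 Hnot) as [n [Hn Hn']].
      exists (mu n). split; [apply Hfree|split].
      * pose proof (Hstep n 0%nat Hn (Nat.le_0_l n)) as Hn0. rewrite epsn_0 in Hn0. lra.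
      * intros m Hm. apply Hstep; [exact Hn|].
        destruct (Nat.le_gt_cases m n) as [|Hlt]; [assumption|].
        exfalso. apply Hn'. apply (Hmono _ m); [lia|exact Hm].
    + exists (mu 0%nat). split; [apply Hfree|split].
      * apply fdist_le. intros f _. rewrite Rminus_diag, Rabs_R0. lra.
      * intros m Hm. exfalso. apply H0, (Hmono _ m); [lia|exact Hm].
Qed.

End Functionals.

(** * McShane extension *)

(* McShane's formula, with the base point as an extra node of value 0. *)
Definition mcshane {X : pointed_space} {Y} (e : Y -> X) (v : Y -> R) (pts : list Y) (x : X) : R :=
  fold_right (fun y acc => Rmin (v y + pdist X (e y) x) acc) (pdist X (pbase X) x) pts.

Lemma Rmin_shift_le a1 a2 b1 b2 c : a1 <= b1 + c -> a2 <= b2 + c -> Rmin a1 a2 <= Rmin b1 b2 + c.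
Proof. unfold Rmin. destruct (Rle_dec a1 a2), (Rle_dec b1 b2); lra. Qed.

Section LipschitzExtension.
Context {X : pointed_space}
  (dist_sym : forall x y : X, pdist X x y = pdist X y x)
  (dist_tri : forall x y z : X, pdist X x z <= pdist X x y + pdist X y z)
  (dist_refl : forall x : X, pdist X x x = 0).

Lemma mcshane_shift_le {Y} (e : Y -> X) v pts x x' :
  mcshane e v pts x <= mcshane e v pts x' + pdist X x x'.
Proof.
  induction pts as [|y pts IH]; simpl.
  - pose proof (dist_tri (pbase X) x' x) as Htri. rewrite (dist_sym x' x) in Htri. exact Htri.
  - apply Rmin_shift_le; [|exact IH].
    pose proof (dist_tri (e y) x' x) as Htri. rewrite (dist_sym x' x) in Htri. lra.
Qed.

Lemma mcshane_le_value {Y} (e : Y -> X) v pts y : In y pts -> mcshane e v pts (e y) <= v y.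
Proof.
  induction pts as [|y' pts IH]; simpl; [tauto|].
  intros [->|Hy].
  - rewrite dist_refl, Rplus_0_r. apply Rmin_l.
  - eapply Rle_trans; [apply Rmin_r|auto].
Qed.

Lemma mcshane_base_le {Y} (e : Y -> X) v pts : mcshane e v pts (pbase X) <= 0.
Proof.
  induction pts as [|y pts IH]; simpl; [rewrite dist_refl; lra|].
  eapply Rle_trans; [apply Rmin_r|exact IH].
Qed.

Lemma mcshane_ge {Y} (e : Y -> X) v pts x c :
  (forall y, In y pts -> c <= v y + pdist X (e y) x) -> c <= pdist X (pbase X) x ->
  c <= mcshane e v pts x.
Proof.
  intros H Hb. induction pts as [|y pts IH]; simpl; [exact Hb|].
  apply Rmin_glb; [apply H; now left|apply IH; auto using in_cons].
Qed.

Lemma lip_extension_approx {Y} (e : Y -> X) (v : Y -> R) (pts : list Y) delta :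
  0 <= delta ->
  (forall y y', In y pts -> In y' pts -> v y <= v y' + pdist X (e y') (e y) + delta) ->
  (forall y, In y pts -> Rabs (v y) <= pdist X (pbase X) (e y) + delta) ->
  exists g, lip_ball X g /\ forall y, In y pts -> Rabs (g (e y) - v y) <= delta.
Proof.
  intros Hdelta Hlip Hbase.
  set (h := mcshane e v pts).
  assert (Hh0 : - delta <= h (pbase X) <= 0).
  { split; [|apply mcshane_base_le].
    apply mcshane_ge; [|rewrite dist_refl; lra].
    intros y Hy. specialize (Hbase y Hy). rewrite dist_sym in Hbase.
    apply Rabs_le_between in Hbase. lra. }
  assert (Hhy : forall y, In y pts -> v y - delta <= h (e y) <= v y).
  { intros y Hy. split; [|now apply mcshane_le_value].
    apply mcshane_ge.
    - intros y' Hy'. specialize (Hlip y y' Hy Hy'). lra.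
    - specialize (Hbase y Hy). apply Rabs_le_between in Hbase. lra. }
  exists (fun x => h x - h (pbase X)). split; [split|].
  - ring.
  - intros x x'. apply Rabs_le_between.
    pose proof (mcshane_shift_le e v pts x x') as Hxx'.
    pose proof (mcshane_shift_le e v pts x' x) as Hx'x.
    rewrite (dist_sym x' x) in Hx'x. fold h in Hxx', Hx'x. lra.
  - intros y Hy. specialize (Hhy y Hy). apply Rabs_le_between. lra.
Qed.

End LipschitzExtension.

(** * The ultraproduct metric *)

Lemma pm_refl (X : pmetric) (x : X) : pdist X x x = 0.
Proof. now apply pm_sep. Qed.

Section UltraproductSpace.
Context {I : Type} (U : ultrafilter I) (M : I -> pmetric).
Notation MU := (ultraproduct U M).

Definition rep (P : MU) : ufam M := urep U M P.

Lemma rep_spec (P : MU) : ubounded M (rep P) /\ proj1_sig P = uclass U M (rep P).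
Proof. unfold rep, urep. apply epsilon_spec. destruct (proj2_sig P) as [x Hx]. now exists x. Qed.

Lemma rep_bounded (P : MU) : ubounded M (rep P).
Proof. apply rep_spec. Qed.

Lemma ulim_udist (x y : ufam M) : ubounded M x -> ubounded M y ->
  ulim U (fun i => pdist (M i) (x i) (y i)) (udist U M x y).
Proof.
  intros [Cx Hx] [Cy Hy]. apply ulimit_spec. exists (Cx + Cy). intro i.
  rewrite Rabs_pos_eq by apply pm_nonneg.
  pose proof (pm_tri (M i) (x i) (pbase (M i)) (y i)) as Htri.
  specialize (Hx i). specialize (Hy i).
  rewrite (pm_sym (M i) (pbase (M i)) (y i)) in Htri. lra.
Qed.

Lemma ulim_dist_rep (P Q : MU) : ulim U (fun i => pdist (M i) (rep P i) (rep Q i)) (pdist MU P Q).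
Proof. apply ulim_udist; apply rep_bounded. Qed.

Lemma ultraproduct_dist_nonneg (P Q : MU) : 0 <= pdist MU P Q.
Proof.
  apply (ulim_le U (fun _ => 0) _ _ _ (ulim_const U 0) (ulim_dist_rep P Q)).
  apply (uf_of_forall U). intro. apply pm_nonneg.
Qed.

Lemma ultraproduct_dist_sym (P Q : MU) : pdist MU P Q = pdist MU Q P.
Proof.
  apply (ulim_unique U _ _ _ (ulim_dist_rep P Q)). apply (ulim_ext U _ _ _ (ulim_dist_rep Q P)).
  apply (uf_of_forall U). intro. apply pm_sym.
Qed.

Lemma ultraproduct_dist_refl (P : MU) : pdist MU P P = 0.
Proof.
  apply (ulim_unique U _ _ _ (ulim_dist_rep P P)). apply (ulim_ext U _ _ _ (ulim_const U 0)).
  apply (uf_of_forall U). intro. symmetry. apply pm_refl.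
Qed.

Lemma ulim_dist_rep_of_class (x : ufam M) (P : MU) : ubounded M x -> proj1_sig P = uclass U M x ->
  ulim U (fun i => pdist (M i) (x i) (rep P i)) 0.
Proof.
  intros Hx HP. destruct (rep_spec P) as [Hb Hrep].
  assert (Hself : uclass U M (rep P) (rep P)).
  { split; [exact Hb|]. apply ulimit_eq. apply (ulim_ext U _ _ _ (ulim_const U 0)).
    apply (uf_of_forall U). intro. symmetry. apply pm_refl. }
  rewrite <- Hrep, HP in Hself. destruct Hself as [_ H0].
  rewrite <- H0. now apply ulim_udist.
Qed.

Lemma ulim_dist_base (P : MU) :
  ulim U (fun i => pdist (M i) (pbase (M i)) (rep P i)) (pdist MU (pbase MU) P).
Proof.
  assert (Hrep0 := ulim_dist_rep_of_class (basefam M) (pbase MU) (basefam_bounded M) eq_refl).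
  assert (Hlim := ulim_dist_rep (pbase MU) P).
  intros eps He.
  apply (uf_weaken U (uf_and U (Hrep0 (eps / 2) ltac:(lra)) (Hlim (eps / 2) ltac:(lra)))).
  intros i [A B]. unfold basefam in A. rewrite Rminus_0_r, Rabs_pos_eq in A by apply pm_nonneg.
  pose proof (pm_tri (M i) (rep (pbase MU) i) (pbase (M i)) (rep P i)) as Htri1.
  pose proof (pm_tri (M i) (pbase (M i)) (rep (pbase MU) i) (rep P i)) as Htri2.
  rewrite (pm_sym (M i) (rep (pbase MU) i) (pbase (M i))) in Htri1.
  apply Rabs_lt_between in B. apply Rabs_lt_between. lra.
Qed.

Lemma dist_rep_almost_ev (pts : list MU) delta : 0 < delta ->
  U (fun i => (forall P Q, In P pts -> In Q pts ->
                 pdist MU Q P < pdist (M i) (rep Q i) (rep P i) + delta) /\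
              (forall P, In P pts ->
                 pdist MU (pbase MU) P < pdist (M i) (pbase (M i)) (rep P i) + delta)).
Proof.
  intro Hdelta. apply uf_and.
  - apply (uf_weaken U (uf_forall_in U pts _ (fun P _ => uf_forall_in U pts _ (fun Q _ =>
      ulim_gt_ev U _ _ (pdist MU Q P - delta) (ulim_dist_rep Q P) ltac:(lra))))).
    intros i Hi P Q HP HQ. specialize (Hi P HP Q HQ). lra.
  - apply (uf_weaken U (uf_forall_in U pts _ (fun P _ =>
      ulim_gt_ev U _ _ (pdist MU (pbase MU) P - delta) (ulim_dist_base P) ltac:(lra)))).
    intros i Hi P HP. specialize (Hi P HP). lra.
Qed.

Definition class_of (x : ufam M) : MU :=
  match excluded_middle_informative (ubounded M x) with
  | left H => exist _ (uclass U M x) (ex_intro _ x (conj H eq_refl))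
  | right _ => pbase MU
  end.

Lemma ulim_dist_class_of (x : ufam M) : ubounded M x ->
  ulim U (fun i => pdist (M i) (x i) (rep (class_of x) i)) 0.
Proof.
  intro Hx. apply (ulim_dist_rep_of_class x _ Hx). unfold class_of.
  destruct (excluded_middle_informative (ubounded M x)); [reflexivity|contradiction].
Qed.
End UltraproductSpace.

(** * The ultraproduct seminorm on families of functionals *)

Section FunctionalFamilies.
Context {I : Type} (U : ultrafilter I) (M : I -> pmetric).

Definition ufbounded (nu : ffam M) : Prop := exists C, forall i, fbound (M i) (nu i) C.

Definition ufdist (nu mu : ffam M) : R := unorm U M (ffam_sub M nu mu).

Definition ffam_comb (a : R) (nu : ffam M) (b : R) (mu : ffam M) : ffam M :=
  fun i => fcomb a (nu i) b (mu i).

Lemma ufbounded_at nu i : ufbounded nu -> fbounded (M i) (nu i).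
Proof. intros [C HC]. now exists C. Qed.

Lemma ufbounded_comb a nu b mu : ufbounded nu -> ufbounded mu -> ufbounded (ffam_comb a nu b mu).
Proof.
  intros [C1 H1] [C2 H2]. exists (Rabs a * C1 + Rabs b * C2). intros i f Hf.
  eapply Rle_trans; [apply Rabs_triang|]. rewrite !Rabs_mult.
  apply Rplus_le_compat; apply Rmult_le_compat_l; auto using Rabs_pos;
    [apply H1|apply H2]; exact Hf.
Qed.

Lemma ulim_ufdist nu mu : ufbounded nu -> ufbounded mu ->
  ulim U (fun i => fdist (M i) (nu i) (mu i)) (ufdist nu mu).
Proof.
  intros [C1 H1] [C2 H2]. apply ulimit_spec. exists (C1 + C2). intro i.
  assert (Hb : fbound (M i) (fsub (nu i) (mu i)) (C1 + C2)).
  { intros f Hf. unfold fsub. specialize (H1 i f Hf). specialize (H2 i f Hf).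
    apply Rabs_le_between in H1, H2. apply Rabs_le_between. lra. }
  rewrite Rabs_pos_eq.
  - exact (fnorm_le (pm_nonneg (M i)) _ _ Hb).
  - exact (fnorm_ge0 (pm_nonneg (M i)) _ (ex_intro _ _ Hb)).
Qed.

Lemma ufdist_le_ev nu mu c : ufbounded nu -> ufbounded mu ->
  U (fun i => fdist (M i) (nu i) (mu i) <= c) -> ufdist nu mu <= c.
Proof.
  intros H1 H2 H. exact (ulim_le U _ _ _ _ (ulim_ufdist nu mu H1 H2) (ulim_const U c) H).
Qed.

Lemma ufdist_lt_ev nu mu c : ufbounded nu -> ufbounded mu ->
  ufdist nu mu < c -> U (fun i => fdist (M i) (nu i) (mu i) < c).
Proof. intros H1 H2. apply ulim_lt_ev, ulim_ufdist; assumption. Qed.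

Lemma ufdist_ge0 nu mu : ufbounded nu -> ufbounded mu -> 0 <= ufdist nu mu.
Proof.
  intros H1 H2. apply (ulim_le U _ _ _ _ (ulim_const U 0) (ulim_ufdist nu mu H1 H2)).
  apply uf_of_forall. intro i. apply fdist_ge0; [apply pm_nonneg|now apply ufbounded_at..].
Qed.

Lemma ufdist_sym nu mu : ufdist nu mu = ufdist mu nu.
Proof.
  unfold ufdist, unorm. f_equal. apply functional_extensionality. intro i. apply fdist_sym.
Qed.

Lemma ufdist_triangle nu rho mu : ufbounded nu -> ufbounded rho -> ufbounded mu ->
  ufdist nu mu <= ufdist nu rho + ufdist rho mu.
Proof.
  intros H1 H2 H3.
  apply (ulim_le U _ _ _ _ (ulim_ufdist nu mu H1 H3)
           (ulim_plus U _ _ _ _ (ulim_ufdist nu rho H1 H2) (ulim_ufdist rho mu H2 H3))).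
  apply uf_of_forall. intro i. apply fdist_triangle; [apply pm_nonneg|now apply ufbounded_at..].
Qed.

Lemma ufdist_comb a nu nu' b mu mu' :
  ufbounded nu -> ufbounded nu' -> ufbounded mu -> ufbounded mu' ->
  ufdist (ffam_comb a nu b mu) (ffam_comb a nu' b mu')
  <= Rabs a * ufdist nu nu' + Rabs b * ufdist mu mu'.
Proof.
  intros H1 H2 H3 H4.
  apply (ulim_le U _ _ _ _
           (ulim_ufdist _ _ (ufbounded_comb a nu b mu H1 H3) (ufbounded_comb a nu' b mu' H2 H4))
           (ulim_plus U _ _ _ _ (ulim_scal U _ _ _ (ulim_ufdist nu nu' H1 H2))
                                (ulim_scal U _ _ _ (ulim_ufdist mu mu' H3 H4)))).
  apply uf_of_forall. intro i. apply fdist_comb; [apply pm_nonneg|now apply ufbounded_at..].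
Qed.

Lemma in_free_ultra_ufbounded nu : in_free_ultra M nu -> ufbounded nu.
Proof.
  intros [Hfree [C HC]]. exists C. intros i f Hf.
  eapply Rle_trans; [|apply (HC i)].
  apply (fnorm_ge_abs (pm_nonneg (M i))); [apply in_free_fbounded, Hfree|exact Hf].
Qed.

Lemma delta_comb_eval l i f : delta_comb M l i f = lcomb l (fun x => f (x i)).
Proof. apply (lcomb_map (fun x : ufam M => x i)). Qed.

Lemma ufbounded_delta_comb l : Forall (fun p => ubounded M (snd p)) l -> ufbounded (delta_comb M l).
Proof.
  induction l as [|p l IH]; intro Hl.
  - exists 0. intros i f _. rewrite delta_comb_eval. simpl. rewrite Rabs_R0. lra.
  - inversion Hl as [|? ? [C HC] Hrest]; subst. destruct (IH Hrest) as [K HK].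
    exists (Rabs (fst p) * C + K). intros i f Hf.
    change (delta_comb M (p :: l) i f) with (fst p * f (snd p i) + delta_comb M l i f).
    eapply Rle_trans; [apply Rabs_triang|]. rewrite Rabs_mult.
    apply Rplus_le_compat; [|now apply HK].
    apply Rmult_le_compat_l; [apply Rabs_pos|].
    eapply Rle_trans; [apply (lip_ball_abs _ _ Hf)|apply HC].
Qed.

Lemma delta_comb_comb a l1 b l2 :
  delta_comb M (scale_coefs a l1 ++ scale_coefs b l2)
  = ffam_comb a (delta_comb M l1) b (delta_comb M l2).
Proof.
  apply functional_extensionality_dep. intro i. apply functional_extensionality. intro f.
  unfold ffam_comb, fcomb. rewrite !delta_comb_eval, lcomb_app, !lcomb_scale. reflexivity.
Qed.

End FunctionalFamilies.

(** * Molecules in the ultraproduct *)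

Section MoleculeIsometry.
Context {I : Type} (U : ultrafilter I) (M : I -> pmetric).
Notation MU := (ultraproduct U M).

Definition lift (l : list (R * MU)) : list (R * ufam M) :=
  map (fun p => (fst p, rep U M (snd p))) l.

Lemma lift_bounded l : Forall (fun p => ubounded M (snd p)) (lift l).
Proof.
  apply Forall_forall. intros x Hx. apply in_map_iff in Hx.
  destruct Hx as [p [<- _]]. apply rep_bounded.
Qed.

Lemma ufbounded_lift l : ufbounded M (delta_comb M (lift l)).
Proof. apply ufbounded_delta_comb, lift_bounded. Qed.

Lemma lift_eval l i f : delta_comb M (lift l) i f = lcomb l (fun P => f (rep U M P i)).
Proof. rewrite delta_comb_eval. apply (lcomb_map (rep U M)). Qed.

Lemma lift_comb a l1 b l2 :
  lift (scale_coefs a l1 ++ scale_coefs b l2) = scale_coefs a (lift l1) ++ scale_coefs b (lift l2).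
Proof. unfold lift, scale_coefs. now rewrite map_app, !map_map. Qed.

Lemma ultralimit_lip_ball (g : forall i, M i -> R) : (forall i, lip_ball (M i) (g i)) ->
  let w := fun P : MU => ulimit U (fun i => g i (rep U M P i)) in
  lip_ball MU w /\ forall P, ulim U (fun i => g i (rep U M P i)) (w P).
Proof.
  intros Hg w.
  assert (Hw : forall P, ulim U (fun i => g i (rep U M P i)) (w P)).
  { intro P. apply ulimit_spec. destruct (rep_bounded U M P) as [C HC]. exists C. intro i.
    eapply Rle_trans; [apply lip_ball_abs, Hg|apply HC]. }
  assert (Hlip : forall P Q, Rabs (w P - w Q) <= pdist MU P Q).
  { intros P Q. apply (ulim_le U _ _ _ _ (ulim_abs U _ _ (ulim_minus U _ _ _ _ (Hw P) (Hw Q)))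
                         (ulim_dist_rep U M P Q)).
    apply uf_of_forall. intro i. apply Hg. }
  split; [split|exact Hw].
  - apply Rabs_eq_0. apply Rle_antisym; [|apply Rabs_pos].
    rewrite <- (ultraproduct_dist_refl U M (pbase MU)).
    apply (ulim_le U _ _ _ _ (ulim_abs U _ _ (Hw (pbase MU))) (ulim_dist_base U M (pbase MU))).
    apply uf_of_forall. intro i. rewrite pm_sym. apply lip_ball_abs, Hg.
  - exact Hlip.
Qed.

Lemma fnorm_lift_lt_ev l eps : 0 < eps ->
  U (fun i => fnorm (M i) (delta_comb M (lift l) i) < fnorm MU (molecule MU l) + eps).
Proof.
  intro He. set (N := fnorm MU (molecule MU l)).
  destruct (uf_ultra _ U (fun i => fnorm (M i) (delta_comb M (lift l) i) < N + eps)) as [H|Hbig];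
    [exact H|exfalso].
  destruct (ufbounded_lift l) as [K HK].
  assert (Hnorming : forall i, exists g, lip_ball (M i) g /\
            (~ fnorm (M i) (delta_comb M (lift l) i) < N + eps ->
             N + eps / 2 < Rabs (delta_comb M (lift l) i g))).
  { intro i. destruct (classic (fnorm (M i) (delta_comb M (lift l) i) < N + eps)) as [Hlt|Hge].
    - exists (fun _ => 0). split; [apply lip_ball_zero, pm_nonneg|tauto].
    - destruct (fnorm_approx (pm_nonneg (M i)) _ (eps / 2) (ex_intro _ K (HK i)) ltac:(lra))
        as [g [Hg Hgn]].
      exists g. split; [exact Hg|intros _; lra]. }
  destruct (non_dep_dep_functional_choice choice _ _ Hnorming) as [g Hg].
  destruct (ultralimit_lip_ball g (fun i => proj1 (Hg i))) as [Hw Hwlim].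
  set (w := fun P => ulimit U (fun i => g i (rep U M P i))) in *.
  assert (Hlim : ulim U (fun i => delta_comb M (lift l) i (g i)) (molecule MU l w)).
  { apply (ulim_ext U _ _ _
             (ulim_lcomb U l (fun i P => g i (rep U M P i)) w (fun p _ => Hwlim (snd p)))).
    apply uf_of_forall. intro i. symmetry. apply lift_eval. }
  assert (Hlarge : N + eps / 2 <= Rabs (molecule MU l w)).
  { apply (ulim_le U _ _ _ _ (ulim_const U _) (ulim_abs U _ _ Hlim)).
    apply (uf_weaken U Hbig). intros i Hi. apply Rlt_le, (proj2 (Hg i) Hi). }
  pose proof (fnorm_ge_abs (ultraproduct_dist_nonneg U M) (molecule MU l) w
                (in_free_fbounded _ (in_free_molecule l)) Hw) as Hsmall.
  fold N in Hsmall. lra.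
Qed.

Lemma fnorm_lift_gt_ev l eps : 0 < eps ->
  U (fun i => fnorm MU (molecule MU l) - eps < fnorm (M i) (delta_comb M (lift l) i)).
Proof.
  intro He. set (N := fnorm MU (molecule MU l)).
  destruct (fnorm_approx (ultraproduct_dist_nonneg U M) (molecule MU l) (eps / 2)
              (in_free_fbounded _ (in_free_molecule l)) ltac:(lra)) as [f [Hf Hfn]].
  fold N in Hfn.
  set (S := lcomb (abs_coefs l) (fun _ => 1)).
  assert (HS : 0 <= S).
  { unfold S. eapply Rle_trans; [apply Rabs_pos|]. apply (lcomb_abs_le l (fun _ => 1)).
    intros. rewrite Rabs_R1. lra. }
  set (delta := eps / (2 * (S + 1))).
  assert (Hdelta : 0 < delta) by (unfold delta; apply Rdiv_lt_0_compat; lra).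
  set (pts := map snd l).
  apply (uf_weaken U (dist_rep_almost_ev U M pts delta Hdelta)). intros i [Hpi Hbi].
  destruct (lip_extension_approx (pm_sym (M i)) (pm_tri (M i)) (pm_refl (M i))
              (fun P => rep U M P i) f pts delta (Rlt_le _ _ Hdelta)) as [g [Hg Hgf]].
  - intros P Q HP HQ. specialize (Hpi P Q HP HQ).
    pose proof (proj2 Hf P Q) as Hflip. rewrite ultraproduct_dist_sym in Hflip.
    apply Rabs_le_between in Hflip. lra.
  - intros P HP. specialize (Hbi P HP).
    pose proof (lip_ball_abs f P Hf) as HfP. rewrite ultraproduct_dist_sym in HfP. lra.
  - assert (Hclose : Rabs (delta_comb M (lift l) i g - molecule MU l f) <= S * delta).
    { rewrite lift_eval, molecule_eval, lcomb_sub. unfold S. rewrite <- lcomb_const.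
      apply lcomb_abs_le. intros p Hp. apply Hgf. unfold pts. now apply in_map. }
    assert (HSd : S * delta < eps / 2).
    { unfold delta. apply (Rmult_lt_reg_r (2 * (S + 1))); [lra|]. field_simplify; lra. }
    pose proof (fnorm_ge_abs (pm_nonneg (M i)) _ g (ufbounded_at M _ i (ufbounded_lift l)) Hg)
      as Hnorm.
    pose proof (Rabs_triang_inv (molecule MU l f) (molecule MU l f - delta_comb M (lift l) i g))
      as Htri.
    rewrite Rabs_minus_sym in Hclose.
    replace (molecule MU l f - (molecule MU l f - delta_comb M (lift l) i g))
      with (delta_comb M (lift l) i g) in Htri by ring.
    lra.
Qed.

Lemma ulim_fnorm_lift l :
  ulim U (fun i => fnorm (M i) (delta_comb M (lift l) i)) (fnorm MU (molecule MU l)).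
Proof.
  intros eps He.
  apply (uf_weaken U (uf_and U (fnorm_lift_lt_ev l eps He) (fnorm_lift_gt_ev l eps He))).
  intros i [A B]. apply Rabs_lt_between. lra.
Qed.


Lemma ufdist_lift l1 l2 :
  ufdist U M (delta_comb M (lift l1)) (delta_comb M (lift l2))
  = fdist MU (molecule MU l1) (molecule MU l2).
Proof.
  set (l := scale_coefs 1 l1 ++ scale_coefs (-1) l2).
  assert (Hfam : ffam_sub M (delta_comb M (lift l1)) (delta_comb M (lift l2))
                 = delta_comb M (lift l)).
  { unfold l. rewrite lift_comb, delta_comb_comb.
    apply functional_extensionality_dep. intro i. apply functional_extensionality. intro f.
    unfold ffam_sub, ffam_comb, fcomb. ring. }
  assert (Hmol : fsub (molecule MU l1) (molecule MU l2) = molecule MU l).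
  { unfold l. rewrite molecule_comb. apply functional_extensionality. intro f.
    unfold fsub, fcomb. ring. }
  unfold ufdist, fdist. rewrite Hfam, Hmol. apply ulimit_eq, ulim_fnorm_lift.
Qed.

Definition class_list (l : list (R * ufam M)) : list (R * MU) :=
  map (fun p => (fst p, class_of U M (snd p))) l.

Lemma ufdist_lift_class_list l : Forall (fun p => ubounded M (snd p)) l ->
  ufdist U M (delta_comb M l) (delta_comb M (lift (class_list l))) = 0.
Proof.
  intro Hl. rewrite Forall_forall in Hl.
  set (bound := fun i =>
         lcomb (abs_coefs l) (fun x => pdist (M i) (x i) (rep U M (class_of U M x) i))).
  assert (Hbound : ulim U bound 0).
  { replace 0 with (lcomb (abs_coefs l) (fun _ : ufam M => 0))
      by (rewrite lcomb_const; ring).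
    apply ulim_lcomb. intros p Hp. unfold abs_coefs in Hp. apply in_map_iff in Hp.
    destruct Hp as [q [<- Hq]]. apply ulim_dist_class_of. exact (Hl q Hq). }
  assert (Hle : forall i,
            fdist (M i) (delta_comb M l i) (delta_comb M (lift (class_list l)) i) <= bound i).
  { intro i. apply fdist_le; [apply pm_nonneg|]. intros f Hf.
    rewrite lift_eval, delta_comb_eval. unfold class_list.
    rewrite (lcomb_map (class_of U M) l (fun P => f (rep U M P i))), lcomb_sub.
    apply lcomb_abs_le. intros p _. apply Hf. }
  apply Rle_antisym.
  - apply Rle_plus_epsilon. intros eps He. rewrite Rplus_0_l.
    apply ufdist_le_ev; [apply ufbounded_delta_comb, Forall_forall, Hl|apply ufbounded_lift|].
    apply (uf_weaken U (ulim_lt_ev U _ _ eps Hbound He)). intros i Hi.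
    specialize (Hle i). lra.
  - apply ufdist_ge0; [apply ufbounded_delta_comb, Forall_forall, Hl|apply ufbounded_lift].
Qed.

End MoleculeIsometry.

(** * The embedding *)

Section Embedding.
Context {I : Type} (U : ultrafilter I) (M : I -> pmetric).
Notation MU := (ultraproduct U M).
Notation lifted l := (delta_comb M (lift U M l)).
Let MU_nonneg := ultraproduct_dist_nonneg U M.

Definition represents (phi : functional MU) (nu : ffam M) : Prop :=
  in_free_ultra M nu /\ forall l, ufdist U M nu (lifted l) = fdist MU phi (molecule MU l).

Section Approximation.
Variable phi : functional MU.
Hypothesis phi_free : in_free MU phi.
Variable mu : nat -> list (R * MU).
Hypothesis mu_approx : forall n, fdist MU phi (molecule MU (mu n)) <= epsn n.

Let fbounded_phi : fbounded MU phi := in_free_fbounded _ phi_free.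

Lemma fdist_approximants m k :
  fdist MU (molecule MU (mu m)) (molecule MU (mu k)) <= epsn m + epsn k.
Proof.
  assert (Hmol : forall n, fbounded MU (molecule MU (mu n)))
    by (intro; apply in_free_fbounded, in_free_molecule).
  eapply Rle_trans; [apply (fdist_triangle MU_nonneg _ phi); auto using fbounded_phi|].
  rewrite fdist_sym. pose proof (mu_approx m). pose proof (mu_approx k). lra.
Qed.

Lemma cauchy_upto_ev n : U (fun i => cauchy_upto (fun k => lifted (mu k) i) n).
Proof.
  assert (Hpair : forall m k, U (fun i =>
            fdist (M i) (lifted (mu m) i) (lifted (mu k) i) < 2 * (epsn m + epsn k))).
  { intros m k. apply ufdist_lt_ev; [apply ufbounded_lift..|].
    rewrite ufdist_lift. pose proof (fdist_approximants m k).
    pose proof (epsn_pos m). pose proof (epsn_pos k). lra. }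
  apply (uf_weaken U (uf_forall_le U n _ (fun m _ => uf_forall_le U n _ (fun k _ => Hpair m k)))).
  intros i Hi m k Hm Hk. apply Rlt_le. exact (Hi m Hm k Hk).
Qed.

Lemma represents_of_close nu : in_free_ultra M nu ->
  (forall m, ufdist U M nu (lifted (mu m)) <= 4 * epsn m) -> represents phi nu.
Proof.
  intros Hnu Hclose. split; [exact Hnu|]. intro l.
  assert (Hb := in_free_ultra_ufbounded M nu Hnu).
  assert (Hl := ufbounded_lift U M l).
  assert (Hmol : forall l', fbounded MU (molecule MU l'))
    by (intro; apply in_free_fbounded, in_free_molecule).
  assert (Hbridge : forall m,
            Rabs (ufdist U M nu (lifted l) - fdist MU phi (molecule MU l)) <= 5 * epsn m).
  { intro m. specialize (Hclose m). pose proof (mu_approx m).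
    pose proof (ufdist_lift U M (mu m) l) as Hiso.
    pose proof (ufdist_triangle U M nu (lifted (mu m)) (lifted l)
                  Hb (ufbounded_lift U M _) Hl) as Tri1.
    pose proof (ufdist_triangle U M (lifted (mu m)) nu (lifted l)
                  (ufbounded_lift U M _) Hb Hl) as Tri2.
    pose proof (fdist_triangle MU_nonneg phi (molecule MU (mu m)) (molecule MU l)
                  fbounded_phi (Hmol _) (Hmol _)) as Tri3.
    pose proof (fdist_triangle MU_nonneg (molecule MU (mu m)) phi (molecule MU l)
                  (Hmol _) fbounded_phi (Hmol _)) as Tri4.
    rewrite (ufdist_sym U M (lifted (mu m)) nu) in Tri2.
    rewrite (fdist_sym _ (molecule MU (mu m)) phi) in Tri4.
    apply Rabs_le_between. lra. }
  apply Rle_antisym; apply (le_of_le_epsn _ _ 5); intro m;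
    specialize (Hbridge m); apply Rabs_le_between in Hbridge; lra.
Qed.

End Approximation.

Lemma represents_exists phi : in_free MU phi -> exists nu, represents phi nu.
Proof.
  intro Hphi.
  destruct (choice (fun n l => fdist MU phi (molecule MU l) <= epsn n)
              (fun n => in_free_approx MU_nonneg phi (epsn n) Hphi (epsn_pos n)))
    as [mu Hmu].
  assert (Hsel : forall i, exists psi, in_free (M i) psi /\
            fdist (M i) psi (lifted (mu 0%nat) i) <= 4 /\
            forall m, cauchy_upto (fun k => lifted (mu k) i) m ->
                      fdist (M i) psi (lifted (mu m) i) <= 4 * epsn m).
  { intro i. apply (free_cauchy_selection (pm_nonneg (M i)) (fun k => lifted (mu k) i)).
    intro. apply in_free_molecule. }
  destruct (non_dep_dep_functional_choice choice _ _ Hsel) as [nu Hnu].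
  destruct (ufbounded_lift U M (mu 0%nat)) as [C0 HC0].
  assert (Hbound : forall i, fbound (M i) (nu i) (C0 + 4)).
  { intros i f Hf. destruct (Hnu i) as [Hfree [H0 _]].
    pose proof (fdist_ge_abs (pm_nonneg (M i)) (nu i) (lifted (mu 0%nat) i) f
                  (in_free_fbounded _ Hfree) (ex_intro _ C0 (HC0 i)) Hf) as Hclose.
    specialize (HC0 i f Hf). apply Rabs_le_between in Hclose, HC0. apply Rabs_le_between. lra. }
  assert (Hultra : in_free_ultra M nu).
  { split; [intro i; apply Hnu|]. exists (C0 + 4). intro i.
    apply fnorm_le; [apply pm_nonneg|apply Hbound]. }
  exists nu. apply (represents_of_close phi Hphi mu Hmu nu Hultra). intro m.
  apply ufdist_le_ev; [now apply in_free_ultra_ufbounded|apply ufbounded_lift|].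
  apply (uf_weaken U (cauchy_upto_ev phi Hphi mu Hmu m)). intros i Hi. now apply Hnu.
Qed.

Definition free_embedding (phi : functional MU) : ffam M :=
  epsilon (inhabits (fun i (f : M i -> R) => 0)) (represents phi).

Lemma free_embedding_spec phi : in_free MU phi -> represents phi (free_embedding phi).
Proof. intro H. unfold free_embedding. apply epsilon_spec, represents_exists, H. Qed.

Lemma free_embedding_ufbounded phi : in_free MU phi -> ufbounded M (free_embedding phi).
Proof. intro H. apply in_free_ultra_ufbounded, (free_embedding_spec phi H). Qed.

Lemma free_embedding_in_span_closure phi : in_free MU phi ->
  in_delta_span_closure U M (free_embedding phi).
Proof.
  intro Hphi. destruct (free_embedding_spec phi Hphi) as [Hultra Hdist].
  split; [exact Hultra|]. intros eps He.
  destruct (in_free_approx MU_nonneg phi eps Hphi He) as [l Hl].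
  exists (lift U M l). split; [apply lift_bounded|].
  change (ufdist U M (free_embedding phi) (lifted l) <= eps). now rewrite Hdist.
Qed.

Lemma free_embedding_norm phi : in_free MU phi -> unorm U M (free_embedding phi) = fnorm MU phi.
Proof.
  intro Hphi. destruct (free_embedding_spec phi Hphi) as [_ Hdist].
  specialize (Hdist nil). unfold ufdist, fdist in Hdist.
  replace (ffam_sub M (free_embedding phi) (lifted nil)) with (free_embedding phi) in Hdist
    by (apply functional_extensionality_dep; intro i; apply functional_extensionality; intro f;
        unfold ffam_sub; rewrite lift_eval; cbn [lcomb fold_right]; ring).
  replace (fsub phi (molecule MU nil)) with phi in Hdist
    by (apply functional_extensionality; intro f; unfold fsub; rewrite molecule_eval;
        cbn [lcomb fold_right]; ring).
  exact Hdist.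
Qed.

Lemma free_embedding_comb_close phi psi a b eps : in_free MU phi -> in_free MU psi -> 0 < eps ->
  ufdist U M (free_embedding (fcomb a phi b psi))
    (ffam_comb M a (free_embedding phi) b (free_embedding psi))
  <= 2 * (1 + Rabs a + Rabs b) * eps.
Proof.
  intros Hphi Hpsi He. set (chi := fcomb a phi b psi).
  assert (Hchi : in_free MU chi) by now apply in_free_comb.
  destruct (in_free_approx MU_nonneg phi eps Hphi He) as [lphi Hlphi].
  destruct (in_free_approx MU_nonneg psi eps Hpsi He) as [lpsi Hlpsi].
  destruct (in_free_approx MU_nonneg chi eps Hchi He) as [lchi Hlchi].
  assert (Hmol : forall l, fbounded MU (molecule MU l))
    by (intro; apply in_free_fbounded, in_free_molecule).
  assert (Hlin : ffam_comb M a (lifted lphi) b (lifted lpsi)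
                 = lifted (scale_coefs a lphi ++ scale_coefs b lpsi))
    by now rewrite lift_comb, delta_comb_comb.
  assert (Hmid : ufdist U M (lifted lchi) (ffam_comb M a (lifted lphi) b (lifted lpsi))
                 <= (1 + Rabs a + Rabs b) * eps).
  { rewrite Hlin, ufdist_lift, molecule_comb.
    eapply Rle_trans;
      [apply (fdist_triangle MU_nonneg _ chi); auto using fbounded_comb, in_free_fbounded|].
    rewrite fdist_sym.
    pose proof (fdist_comb MU_nonneg a phi (molecule MU lphi) b psi (molecule MU lpsi)
                  (in_free_fbounded _ Hphi) (Hmol _) (in_free_fbounded _ Hpsi) (Hmol _)) as Hmolcomb.
    fold chi in Hmolcomb. pose proof (Rabs_pos a). pose proof (Rabs_pos b). nra. }
  destruct (free_embedding_spec phi Hphi) as [Hphi' Dphi].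
  destruct (free_embedding_spec psi Hpsi) as [Hpsi' Dpsi].
  destruct (free_embedding_spec chi Hchi) as [Hchi' Dchi].
  apply in_free_ultra_ufbounded in Hphi', Hpsi', Hchi'.
  assert (Hlift := ufbounded_lift U M).
  assert (Hcomb := ufbounded_comb M a).
  pose proof (ufdist_comb U M a (lifted lphi) (free_embedding phi)
                b (lifted lpsi) (free_embedding psi)
                (Hlift _) Hphi' (Hlift _) Hpsi') as Hright.
  rewrite !(ufdist_sym U M (lifted _)), Dphi, Dpsi in Hright.
  pose proof (ufdist_triangle U M _ _ _ Hchi' (Hlift lchi) (Hcomb _ b _ Hphi' Hpsi')) as T1.
  pose proof (ufdist_triangle U M _ _ _ (Hlift lchi) (Hcomb _ b _ (Hlift lphi) (Hlift lpsi))
                (Hcomb _ b _ Hphi' Hpsi')) as T2.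
  rewrite Dchi in T1.
  pose proof (Rabs_pos a). pose proof (Rabs_pos b). nra.
Qed.

Lemma free_embedding_linear phi psi a b : in_free MU phi -> in_free MU psi ->
  ufdist U M (free_embedding (fcomb a phi b psi))
    (ffam_comb M a (free_embedding phi) b (free_embedding psi)) = 0.
Proof.
  intros Hphi Hpsi. apply Rle_antisym.
  - apply (le_of_le_epsn _ _ (2 * (1 + Rabs a + Rabs b))). intro m. rewrite Rplus_0_l.
    apply free_embedding_comb_close; auto using epsn_pos.
  - apply ufdist_ge0; [apply free_embedding_ufbounded; now apply in_free_comb|].
    apply ufbounded_comb; now apply free_embedding_ufbounded.
Qed.

Lemma span_closure_lifted_approx nu eps : in_delta_span_closure U M nu -> 0 < eps ->
  exists l, ufdist U M nu (lifted l) <= eps.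
Proof.
  intros [Hnu Happrox] He. destruct (Happrox eps He) as [l [Hl Hclose]].
  exists (class_list U M l).
  eapply Rle_trans; [apply (ufdist_triangle U M _ (delta_comb M l));
    auto using in_free_ultra_ufbounded, ufbounded_delta_comb, ufbounded_lift|].
  rewrite ufdist_lift_class_list by exact Hl. unfold ufdist. lra.
Qed.

Lemma free_embedding_onto nu : in_delta_span_closure U M nu ->
  exists phi, in_free MU phi /\ ufdist U M nu (free_embedding phi) = 0.
Proof.
  intro Hnu. assert (Hb : ufbounded M nu) by apply in_free_ultra_ufbounded, Hnu.
  destruct (choice (fun n l => ufdist U M nu (lifted l) <= epsn n)
              (fun n => span_closure_lifted_approx nu (epsn n) Hnu (epsn_pos n))) as [ls Hls].
  destruct (in_free_complete MU_nonneg (fun n => molecule MU (ls n)) (fun m => 2 * epsn m))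
    as [phi [Hphi Hclose]].
  - intro. apply in_free_molecule.
  - intros e He. destruct (epsn_small (e / 2)) as [m Hm]; [lra|]. exists m. lra.
  - intros m n Hmn. rewrite <- ufdist_lift.
    eapply Rle_trans; [apply (ufdist_triangle U M _ nu); auto using ufbounded_lift|].
    rewrite (ufdist_sym U M (lifted (ls n)) nu).
    pose proof (Hls m). pose proof (Hls n). pose proof (epsn_antitone _ _ Hmn). lra.
  - exists phi. split; [exact Hphi|]. apply Rle_antisym.
    + apply (le_of_le_epsn _ _ 3). intro m.
      destruct (free_embedding_spec phi Hphi) as [Hultra Hdist].
      eapply Rle_trans; [apply (ufdist_triangle U M _ (lifted (ls m)));
        auto using ufbounded_lift, in_free_ultra_ufbounded|].
      rewrite (ufdist_sym U M (lifted (ls m))), Hdist.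
      pose proof (Hls m). pose proof (Hclose m). lra.
    + apply ufdist_ge0; [exact Hb|apply free_embedding_ufbounded, Hphi].
Qed.

End Embedding.

Theorem theorem3p4 (I : Type) (U : ultrafilter I) (M : I -> pmetric) :
  exists T : functional (ultraproduct U M) -> ffam M,
    (* T maps F((M_i)_U) into the closed span of the (delta(x_i))_U *)
    (forall phi, in_free (ultraproduct U M) phi ->
       in_delta_span_closure U M (T phi)) /\
    (* T is linear (modulo the null families defining the ultraproduct) *)
    (forall phi psi a b,
       in_free (ultraproduct U M) phi -> in_free (ultraproduct U M) psi ->
       unorm U M (ffam_sub M (T (fun f => a * phi f + b * psi f))
                             (fun i f => a * T phi i f + b * T psi i f)) = 0) /\
    (* T is isometric *)
    (forall phi, in_free (ultraproduct U M) phi ->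
       unorm U M (T phi) = fnorm (ultraproduct U M) phi) /\
    (* T is onto the closed span *)
    (forall nu, in_delta_span_closure U M nu ->
       exists phi, in_free (ultraproduct U M) phi /\
         unorm U M (ffam_sub M nu (T phi)) = 0).
Proof.
  exists (free_embedding U M). split; [|split; [|split]].
  - apply free_embedding_in_span_closure.
  - apply free_embedding_linear.
  - apply free_embedding_norm.
  - apply free_embedding_onto.
Qed.
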